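(* Suppose $G$ satisfies (H1) and (H2), let $\gamma(\cdot,t)$, $t\in[0,\omega)$, be the solution of $\partial_t\gamma=G(k)kN$ with smooth closed strictly convex initial curve on its maximal interval, let $k(\theta,t)$ be its curvature in the tangent-angle parametrization, and set $\Phi=\Phi(k(\theta,t))$ with $\Phi(x)=G(x)x$. Then for every $\varpi\in(0,\omega)$, $$\max_{0\le t\le\varpi,\ \theta\in\mathbb S^1}\Big|\frac{\partial\Phi}{\partial\theta}\Big|^2\le\max\Big\{2\max_{0\le t\le\varpi,\ \theta\in\mathbb S^1}\Phi^2,\ \max_{t=0,\ \theta\in\mathbb S^1}\Big(\Big|\frac{\partial\Phi}{\partial\theta}\Big|^2+2\Phi^2\Big)\Big\}.$$
   Context: (H1): $G\in C^3(0,\infty)$, $G>0$, $G'\ge0$ on $(0,\infty)$. (H2): $x\mapsto G(x)x^2$ is convex on $(0,\infty)$ and there is $C_0>0$ with $G'(x)x\le C_0G(x)$ for all sufficiently large $x$. $k$ is the positive curvature and $N$ the unit inward normal; $\theta\in\mathbb S^1=\mathbb R/2\pi\mathbb Z$ is the tangent angle, which parametrizes each strictly convex curve; the solution exists on a maximal finite interval $[0,\omega)$ and stays strictly convex. *)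

From Stdlib Require Import Reals Lra.
Open Scope R_scope.

Definition Phi (G : R -> R) (x : R) : R := G x * x.

(** The space-time domain R x [0, w) (theta ranges over R; functions are
    2*PI-periodic in theta, so this is S^1 x [0,w)). *)
Definition in_dom (w t : R) : Prop := 0 <= t < w.

Definition cont2 (w : R) (f : R -> R -> R) : Prop :=
  forall th t, in_dom w t ->
    forall eps, eps > 0 -> exists del, del > 0 /\
      forall th' t', in_dom w t' -> Rabs (th' - th) < del -> Rabs (t' - t) < del ->
        Rabs (f th' t' - f th t) < eps.

(** Smoothness on S^1 x [0,w) (up to t = 0): f is jointly continuous, has a
    theta-partial derivative everywhere on the domain and a t-partial
    derivative for 0 < t < w, and both partial derivatives are again smooth
    (in particular they extend continuously to t = 0). *)
CoInductive Smooth2 (w : R) : (R -> R -> R) -> Prop :=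
| smooth2_intro : forall f : R -> R -> R,
    cont2 w f ->
    (exists fth : R -> R -> R,
        (forall th t, in_dom w t -> derivable_pt_lim (fun s => f s t) th (fth th t))
        /\ Smooth2 w fth) ->
    (exists ft : R -> R -> R,
        (forall th t, 0 < t < w -> derivable_pt_lim (fun s => f th s) t (ft th t))
        /\ Smooth2 w ft) ->
    Smooth2 w f.

Definition H1 (G : R -> R) : Prop :=
  exists G1 G2 G3 : R -> R,
    (forall x, 0 < x -> derivable_pt_lim G x (G1 x)) /\
    (forall x, 0 < x -> derivable_pt_lim G1 x (G2 x)) /\
    (forall x, 0 < x -> derivable_pt_lim G2 x (G3 x)) /\
    (forall x, 0 < x -> continuity_pt G3 x) /\
    (forall x, 0 < x -> 0 < G x) /\
    (forall x, 0 < x -> 0 <= G1 x).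

Definition H2 (G : R -> R) : Prop :=
  (forall a b l, 0 < a -> 0 < b -> 0 <= l <= 1 ->
     G (l * a + (1 - l) * b) * (l * a + (1 - l) * b) ^ 2
       <= l * (G a * a ^ 2) + (1 - l) * (G b * b ^ 2)) /\
  exists C0 M, 0 < C0 /\
    forall x, M < x -> forall d, derivable_pt_lim G x d -> d * x <= C0 * G x.

(** The flow  d/dt gamma = G(k) k N  for a family of smooth closed strictly
    convex curves, written in the tangent-angle parametrization:
    gamma(theta,t) = (X theta t, Y theta t), unit tangent T = (cos, sin),
    inward normal N = (-sin, cos), d gamma/d theta = T / k (so k is the
    curvature at the point with tangent angle theta), and the normal velocity
    <d gamma/dt, N> equals G(k) k (tangential velocity is free, as it only
    reflects the reparametrization by tangent angle). *)
Definition is_flow (G : R -> R) (w : R) (X Y k : R -> R -> R) : Prop :=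
  Smooth2 w X /\ Smooth2 w Y /\ Smooth2 w k /\
  (forall th t, in_dom w t ->
     X (th + 2 * PI) t = X th t /\ Y (th + 2 * PI) t = Y th t /\
     k (th + 2 * PI) t = k th t) /\
  (forall th t, in_dom w t -> 0 < k th t) /\
  (forall th t, in_dom w t ->
     derivable_pt_lim (fun s => X s t) th (cos th / k th t) /\
     derivable_pt_lim (fun s => Y s t) th (sin th / k th t)) /\
  (forall th t, 0 < t < w -> exists xt yt,
     derivable_pt_lim (fun s => X th s) t xt /\
     derivable_pt_lim (fun s => Y th s) t yt /\
     xt * (- sin th) + yt * cos th = Phi G (k th t)).

From Stdlib Require Import Reals Lra Psatz Classical ClassicalEpsilon.
Open Scope R_scope.

(** Write u = Phi(k(theta,t)) with Phi(x) = G(x) x.  Differentiating the flow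
    equation in the tangent-angle parametrization gives the curvature
    evolution k_t = k^2 (u_thth + u), i.e. u solves
        u_t = a (u_thth + u),   a = Phi'(k) k^2 > 0   (by (H1)).
    For such a u the energy E = u_th^2 + u^2 obeys a maximum principle: at a
    spatial maximum of E with u_th <> 0 we get u_thth + u = 0 and
    u_th (u_thth + u)_th <= 0, whence E_t = 2 a u_th (u_thth + u)_th <= 0.
    Penalizing by -eps t and using compactness of S^1 x [0, varpi] turns this
    into  E <= max (sup u^2, sup E(., 0)), which implies the theorem. *)

Lemma deriv_increment_sign (f : R -> R) (x l : R) :
  derivable_pt_lim f x l -> l <> 0 ->
  exists d, 0 < d /\ forall h, h <> 0 -> Rabs h < d -> 0 < l * h * (f (x + h) - f x).
Proof.
  intros Hf Hl.
  assert (Hel : 0 < Rabs l / 2) by (apply Rabs_pos_lt in Hl; lra).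
  destruct (Hf _ Hel) as [d Hd]. exists d; split; [apply cond_pos|].
  intros h Hh0 Hh. specialize (Hd h Hh0 Hh).
  set (q := (f (x + h) - f x) / h) in Hd.
  replace (f (x + h) - f x) with (q * h) by (unfold q; field; exact Hh0).
  assert (Hlq : 0 < l * q).
  { apply Rabs_def2 in Hd. unfold Rabs in Hd. destruct (Rcase_abs l); nra. }
  assert (0 < h * h) by nra. nra.
Qed.

Lemma deriv_zero_at_local_max (f : R -> R) (x l r : R) :
  0 < r -> (forall y, Rabs (y - x) < r -> f y <= f x) ->
  derivable_pt_lim f x l -> l = 0.
Proof.
  intros Hr Hmax Hf.
  change (derive_pt f x (exist _ l Hf) = 0).
  apply (deriv_maximum f (x - r) (x + r)); try lra.
  intros y Hy1 Hy2. apply Hmax. apply Rabs_def1; lra.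
Qed.

Lemma deriv_nonneg_at_left_max (f : R -> R) (x l r : R) :
  0 < r -> (forall h, 0 < h < r -> f (x - h) <= f x) ->
  derivable_pt_lim f x l -> 0 <= l.
Proof.
  intros Hr Hmax Hf. destruct (Rle_or_lt 0 l) as [|Hl]; [assumption|exfalso].
  destruct (deriv_increment_sign f x l Hf ltac:(lra)) as [d [Hd Hinc]].
  set (h := Rmin d r / 2).
  assert (0 < Rmin d r) by (apply Rmin_pos; lra).
  pose proof (Rmin_l d r). pose proof (Rmin_r d r).
  specialize (Hinc (- h) ltac:(unfold h; intro; lra)
                ltac:(rewrite Rabs_Ropp, Rabs_pos_eq; unfold h; lra)).
  specialize (Hmax h ltac:(unfold h; lra)).
  replace (x + - h) with (x - h) in Hinc by ring.
  assert (0 < l * - h) by (unfold h; nra). nra.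
Qed.

Lemma second_deriv_nonpos_at_local_max (f f' : R -> R) (x c r : R) :
  0 < r -> (forall y, Rabs (y - x) < r -> f y <= f x) ->
  (forall y, derivable_pt_lim f y (f' y)) -> derivable_pt_lim f' x c -> c <= 0.
Proof.
  intros Hr Hmax Hf Hc.
  assert (Hcrit : f' x = 0) by exact (deriv_zero_at_local_max f x _ r Hr Hmax (Hf x)).
  destruct (Rle_or_lt c 0) as [|Hcpos]; [assumption|exfalso].
  destruct (deriv_increment_sign f' x c Hc ltac:(lra)) as [d [Hd Hinc]].
  set (h := Rmin d r / 2).
  assert (0 < Rmin d r) by (apply Rmin_pos; lra).
  pose proof (Rmin_l d r). pose proof (Rmin_r d r).
  destruct (MVT_cor2 f f' x (x + h)) as [xi [Hmvt Hxi]];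
    [unfold h; lra | intros; apply Hf |].
  specialize (Hinc (xi - x) ltac:(intro; lra) ltac:(rewrite Rabs_pos_eq; unfold h in *; lra)).
  replace (x + (xi - x)) with xi in Hinc by ring.
  specialize (Hmax (x + h) ltac:(replace (x + h - x) with h by ring;
                                  rewrite Rabs_pos_eq; unfold h; lra)).
  assert (0 < h) by (unfold h; lra).
  replace (x + h - x) with h in Hmvt by ring.
  rewrite Hcrit in Hinc.
  assert (Hslope : 0 < f' xi) by (assert (0 < c * (xi - x)) by nra; nra).
  nra.
Qed.

Lemma cont2_slice (w : R) (F : R -> R -> R) (t th : R) :
  cont2 w F -> in_dom w t -> continuity_pt (fun s => F s t) th.
Proof.
  intros HF Ht eps Heps. destruct (HF th t Ht eps Heps) as [d [Hd Hclose]].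
  exists d; split; [exact Hd|]. intros y [_ Hy]. simpl in *. unfold R_dist in *.
  apply Hclose; [exact Ht | exact Hy | unfold Rminus; rewrite Rplus_opp_r, Rabs_R0; lra].
Qed.

Lemma cont2_ext (w : R) (F F' : R -> R -> R) :
  cont2 w F -> (forall th t, F th t = F' th t) -> cont2 w F'.
Proof.
  intros HF E th t Ht eps Heps. destruct (HF th t Ht eps Heps) as [d [Hd Hclose]].
  exists d; split; [exact Hd|]. intros. rewrite <- !E. auto.
Qed.

Lemma cont2_comp (w : R) (F : R -> R -> R) (g : R -> R) :
  cont2 w F -> (forall th t, in_dom w t -> continuity_pt g (F th t)) ->
  cont2 w (fun th t => g (F th t)).
Proof.
  intros HF Hg th t Ht eps Heps.
  destruct (Hg th t Ht eps Heps) as [a [Ha Hga]].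
  destruct (HF th t Ht a Ha) as [d [Hd Hclose]].
  exists d; split; [exact Hd|]. intros th' t' Ht' Hth Htt.
  specialize (Hclose th' t' Ht' Hth Htt).
  destruct (Req_dec (F th t) (F th' t')) as [E|Hne].
  - rewrite E. unfold Rminus; rewrite Rplus_opp_r, Rabs_R0; lra.
  - apply (Hga (F th' t')). split; [split; [exact I | exact Hne] | exact Hclose].
Qed.

Lemma cont2_plus (w : R) (F1 F2 : R -> R -> R) :
  cont2 w F1 -> cont2 w F2 -> cont2 w (fun th t => F1 th t + F2 th t).
Proof.
  intros HF1 HF2 th t Ht eps Heps.
  destruct (HF1 th t Ht (eps / 2)) as [d1 [Hd1 Hc1]]; [lra|].
  destruct (HF2 th t Ht (eps / 2)) as [d2 [Hd2 Hc2]]; [lra|].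
  exists (Rmin d1 d2); split; [apply Rmin_pos; assumption|].
  pose proof (Rmin_l d1 d2). pose proof (Rmin_r d1 d2).
  intros th' t' Ht' Hth Htt.
  specialize (Hc1 th' t' Ht' ltac:(lra) ltac:(lra)).
  specialize (Hc2 th' t' Ht' ltac:(lra) ltac:(lra)).
  replace (F1 th' t' + F2 th' t' - (F1 th t + F2 th t))
    with ((F1 th' t' - F1 th t) + (F2 th' t' - F2 th t)) by ring.
  eapply Rle_lt_trans; [apply Rabs_triang | lra].
Qed.

(** Products reduce to sums and squares by polarization:
    x y = (x + y)^2 / 4 - (x - y)^2 / 4. *)
Lemma cont2_mult (w : R) (F1 F2 : R -> R -> R) :
  cont2 w F1 -> cont2 w F2 -> cont2 w (fun th t => F1 th t * F2 th t).
Proof.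
  intros HF1 HF2.
  set (q := fun z => z * z / 4).
  assert (Hq : forall z, continuity_pt q z) by (intro z; unfold q; reg).
  assert (Hopp : forall z, continuity_pt (fun y => - y) z) by (intro z; reg).
  apply cont2_ext with
    (fun th t => q (F1 th t + F2 th t) + - q (F1 th t + - F2 th t)).
  - apply cont2_plus.
    + apply (cont2_comp w (fun th t => F1 th t + F2 th t) q);
        [apply cont2_plus; assumption | auto].
    + apply (cont2_comp w (fun th t => q (F1 th t + - F2 th t)) (fun y => - y));
        [| auto].
      apply (cont2_comp w (fun th t => F1 th t + - F2 th t) q); [| auto].
      apply cont2_plus; [assumption|].
      apply (cont2_comp w F2 (fun y => - y)); auto.
  - intros th t. unfold q. field.
Qed.

Lemma mixed_difference_mvt (f f1 f12 : R -> R -> R) (x0 y0 h l : R) :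
  0 < h -> 0 < l ->
  (forall x y, x0 <= x <= x0 + h -> y0 <= y <= y0 + l ->
     derivable_pt_lim (fun s => f s y) x (f1 x y)) ->
  (forall x y, x0 <= x <= x0 + h -> y0 <= y <= y0 + l ->
     derivable_pt_lim (fun s => f1 x s) y (f12 x y)) ->
  exists x y, x0 < x < x0 + h /\ y0 < y < y0 + l /\
    f (x0 + h) (y0 + l) - f (x0 + h) y0 - f x0 (y0 + l) + f x0 y0 = h * l * f12 x y.
Proof.
  intros Hh Hl Hf1 Hf12.
  destruct (MVT_cor2 (fun s => f s (y0 + l) - f s y0)
              (fun s => f1 s (y0 + l) - f1 s y0) x0 (x0 + h)) as [x [Ex Hx]];
    [lra | intros; apply derivable_pt_lim_minus; apply Hf1; lra |].
  destruct (MVT_cor2 (fun s => f1 x s) (fun s => f12 x s) y0 (y0 + l)) as [y [Ey Hy]];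
    [lra | intros; apply Hf12; lra |].
  exists x, y; split; [exact Hx|]; split; [exact Hy|].
  replace (x0 + h - x0) with h in Ex by ring.
  replace (y0 + l - y0) with l in Ey by ring.
  replace (f (x0 + h) (y0 + l) - f (x0 + h) y0 - f x0 (y0 + l) + f x0 y0)
    with (f (x0 + h) (y0 + l) - f (x0 + h) y0 - (f x0 (y0 + l) - f x0 y0)) by ring.
  rewrite Ex, Ey. ring.
Qed.

(** Schwarz: continuous mixed partials of f on S^1 x [0, w) agree at interior
    times, because both approximate the same mixed second difference. *)
Lemma schwarz (w : R) (f f1 ft f1t ftth : R -> R -> R) (th t : R) :
  0 < t < w ->
  (forall a s, in_dom w s -> derivable_pt_lim (fun x => f x s) a (f1 a s)) ->
  (forall a s, 0 < s < w -> derivable_pt_lim (fun x => f a x) s (ft a s)) ->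
  (forall a s, 0 < s < w -> derivable_pt_lim (fun x => f1 a x) s (f1t a s)) ->
  (forall a s, in_dom w s -> derivable_pt_lim (fun x => ft x s) a (ftth a s)) ->
  cont2 w f1t -> cont2 w ftth ->
  f1t th t = ftth th t.
Proof.
  intros Ht Hf1 Hft Hf1t Hftth C1 C2.
  assert (Hdom : in_dom w t) by (unfold in_dom; lra).
  apply NNPP; intro Hne.
  set (e := Rabs (f1t th t - ftth th t) / 3).
  assert (He : 0 < e).
  { assert (Hdiff : f1t th t - ftth th t <> 0) by (intro; apply Hne; lra).
    unfold e. apply Rabs_pos_lt in Hdiff. lra. }
  destruct (C1 th t Hdom e He) as [d1 [Hd1 Hc1]].
  destruct (C2 th t Hdom e He) as [d2 [Hd2 Hc2]].
  set (h := Rmin (Rmin d1 d2) (w - t) / 2).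
  assert (0 < Rmin (Rmin d1 d2) (w - t)) by (repeat apply Rmin_pos; lra).
  pose proof (Rmin_l (Rmin d1 d2) (w - t)). pose proof (Rmin_r (Rmin d1 d2) (w - t)).
  pose proof (Rmin_l d1 d2). pose proof (Rmin_r d1 d2).
  assert (Hh : 0 < h /\ h < d1 /\ h < d2 /\ t + h < w) by (unfold h; lra).
  destruct (mixed_difference_mvt f f1 f1t th t h h) as [x [y [Hx [Hy E1]]]];
    [lra | lra | intros; apply Hf1; unfold in_dom; lra | intros; apply Hf1t; lra |].
  destruct (mixed_difference_mvt (fun s x => f x s) (fun s x => ft x s) (fun s x => ftth x s) t th h h)
    as [y' [x' [Hy' [Hx' E2]]]];
    [lra | lra | intros; apply Hft; lra | intros; apply Hftth; unfold in_dom; lra |].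
  assert (Eq : f1t x y = ftth x' y').
  { apply Rmult_eq_reg_l with (h * h); [| nra]. rewrite <- E1, <- E2. ring. }
  specialize (Hc1 x y ltac:(unfold in_dom; lra)
                ltac:(rewrite Rabs_pos_eq; lra) ltac:(rewrite Rabs_pos_eq; lra)).
  specialize (Hc2 x' y' ltac:(unfold in_dom; lra)
                ltac:(rewrite Rabs_pos_eq; lra) ltac:(rewrite Rabs_pos_eq; lra)).
  rewrite Eq in Hc1.
  assert (Rabs (f1t th t - ftth th t)
          <= Rabs (ftth x' y' - f1t th t) + Rabs (ftth x' y' - ftth th t)).
  { replace (f1t th t - ftth th t)
      with (- (ftth x' y' - f1t th t) + (ftth x' y' - ftth th t)) by ring.
    rewrite <- (Rabs_Ropp (ftth x' y' - f1t th t)). apply Rabs_triang. }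
  unfold e in *. lra.
Qed.
(** Tube lemma: a bound F <= M on the compact slice [a, b] x {t0} extends,
    up to eta, to [a, b] x (t0 - d, t0 + d); proved by a sup argument on the
    length of the good part of [a, b]. *)
Lemma tube_bound (w : R) (F : R -> R -> R) (a b t0 M eta : R) :
  a <= b -> cont2 w F -> in_dom w t0 -> 0 < eta ->
  (forall th, a <= th <= b -> F th t0 <= M) ->
  exists d, 0 < d /\ forall th t, a <= th <= b -> in_dom w t -> Rabs (t - t0) < d ->
    F th t < M + eta.
Proof.
  intros Hab HF Ht0 Heta HM.
  set (good := fun x => a <= x <= b /\ exists d, 0 < d /\
         forall th t, a <= th <= x -> in_dom w t -> Rabs (t - t0) < d -> F th t < M + eta).
  assert (Ga : good a).
  { split; [lra|]. destruct (HF a t0 Ht0 eta Heta) as [d [Hd Hclose]].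
    exists d; split; [exact Hd|]. intros th t Hth Ht Htt.
    replace th with a by lra.
    specialize (Hclose a t Ht ltac:(unfold Rminus; rewrite Rplus_opp_r, Rabs_R0; lra) Htt).
    apply Rabs_def2 in Hclose. specialize (HM a ltac:(lra)). lra. }
  destruct (completeness good) as [s [Hub Hlub]];
    [exists b; intros x [Hx _]; lra | exists a; exact Ga |].
  assert (Has : a <= s) by (apply Hub; exact Ga).
  assert (Hsb : s <= b) by (apply Hlub; intros x [Hx _]; lra).
  destruct (HF s t0 Ht0 eta Heta) as [ds [Hds Hnear]].
  assert (Hx : exists x, good x /\ s - ds < x).
  { apply NNPP; intro Hno. assert (s <= s - ds); [|lra].
    apply Hlub. intros x Gx. destruct (Rle_or_lt x (s - ds)); [assumption|].
    exfalso; apply Hno; exists x; auto. }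
  destruct Hx as [x [[Hxab [dx [Hdx Hgx]]] Hxs]].
  set (x' := Rmin b (s + ds / 2)).
  assert (Hx'b : x' <= b) by apply Rmin_l. assert (Hx's : x' <= s + ds / 2) by apply Rmin_r.
  assert (Gx' : good x').
  { split; [unfold x', Rmin; destruct Rle_dec; lra|].
    exists (Rmin dx ds); split; [apply Rmin_pos; assumption|].
    pose proof (Rmin_l dx ds). pose proof (Rmin_r dx ds).
    intros th t Hth Ht Htt. destruct (Rle_or_lt th x).
    - apply Hgx; [lra | assumption | lra].
    - specialize (Hnear th t Ht ltac:(apply Rabs_def1; lra) ltac:(lra)).
      apply Rabs_def2 in Hnear. specialize (HM s ltac:(lra)). lra. }
  assert (x' <= s) by (apply Hub; exact Gx').
  assert (Gb : good b) by (unfold x' in *; unfold Rmin in *; destruct Rle_dec; [exact Gx' | lra]).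
  destruct Gb as [_ [d [Hd Hgb]]]. exists d; split; [exact Hd|].
  intros; apply Hgb; auto; lra.
Qed.

Lemma slice_argmax (w : R) (F : R -> R -> R) (a b : R) :
  a <= b -> cont2 w F ->
  exists thm : R -> R, forall t, in_dom w t ->
    a <= thm t <= b /\ forall th, a <= th <= b -> F th t <= F (thm t) t.
Proof.
  intros Hab HF.
  apply (choice (fun t m => in_dom w t -> a <= m <= b /\ forall th, a <= th <= b -> F th t <= F m t)).
  intro t. destruct (classic (in_dom w t)) as [Ht|Ht].
  - destruct (continuity_ab_maj (fun s => F s t) a b Hab) as [m [Hmax Hm]];
      [intros; apply (cont2_slice w); assumption |].
    exists m; intros _; auto.
  - exists a; intro; contradiction.
Qed.

(** The slice maximum t |-> max_theta F(theta, t) is continuous: from below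
    by continuity of F, from above by the tube lemma. *)
Lemma slice_max_continuous (w : R) (F : R -> R -> R) (a b : R) (thm : R -> R) :
  a <= b -> cont2 w F ->
  (forall t, in_dom w t -> a <= thm t <= b /\ forall th, a <= th <= b -> F th t <= F (thm t) t) ->
  forall t0, in_dom w t0 -> forall e, 0 < e -> exists d, 0 < d /\
    forall t, in_dom w t -> Rabs (t - t0) < d -> Rabs (F (thm t) t - F (thm t0) t0) < e.
Proof.
  intros Hab HF Hthm t0 Ht0 e He. destruct (Hthm t0 Ht0) as [Hin0 Hmax0].
  destruct (HF (thm t0) t0 Ht0 e He) as [d1 [Hd1 Hlow]].
  destruct (tube_bound w F a b t0 (F (thm t0) t0) e Hab HF Ht0 He Hmax0) as [d2 [Hd2 Hup]].
  exists (Rmin d1 d2); split; [apply Rmin_pos; assumption|].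
  pose proof (Rmin_l d1 d2). pose proof (Rmin_r d1 d2).
  intros t Ht Htt. destruct (Hthm t Ht) as [Hin Hmax].
  specialize (Hlow (thm t0) t Ht ltac:(unfold Rminus; rewrite Rplus_opp_r, Rabs_R0; lra) ltac:(lra)).
  apply Rabs_def2 in Hlow. specialize (Hmax (thm t0) Hin0).
  specialize (Hup (thm t) t Hin Ht ltac:(lra)).
  apply Rabs_def1; lra.
Qed.

(** Extreme value theorem for a function continuous relative to [a, b]
    (reduced to the Stdlib version by clamping to [a, b]). *)
Lemma interval_max (g : R -> R) (a b : R) :
  a <= b ->
  (forall c, a <= c <= b -> forall e, 0 < e -> exists d, 0 < d /\
     forall y, a <= y <= b -> Rabs (y - c) < d -> Rabs (g y - g c) < e) ->
  exists m, a <= m <= b /\ forall y, a <= y <= b -> g m >= g y.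
Proof.
  intros Hab Hg.
  set (clamp := fun y => Rmin b (Rmax a y)).
  assert (Hin : forall y, a <= clamp y <= b)
    by (intro y; unfold clamp, Rmin, Rmax; repeat destruct Rle_dec; lra).
  assert (Hid : forall y, a <= y <= b -> clamp y = y)
    by (intros y Hy; unfold clamp, Rmin, Rmax; repeat destruct Rle_dec; lra).
  assert (Hlip : forall y c, Rabs (clamp y - clamp c) <= Rabs (y - c))
    by (intros y c; unfold clamp, Rmin, Rmax, Rabs;
        repeat destruct Rle_dec; repeat destruct Rcase_abs; lra).
  destruct (continuity_ab_maj (fun y => g (clamp y)) a b Hab) as [m [Hmax Hm]].
  - intros c Hc e He. destruct (Hg c Hc e He) as [d [Hd Hclose]].
    exists d; split; [exact Hd|]. intros y [_ Hy]. simpl in *. unfold R_dist in *.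
    rewrite (Hid c Hc). apply Hclose; [apply Hin|].
    specialize (Hlip y c). rewrite (Hid c Hc) in Hlip. lra.
  - exists m; split; [exact Hm|]. intros y Hy.
    specialize (Hmax y Hy). rewrite !Hid in Hmax by assumption. lra.
Qed.

Lemma periodic_reduce (f : R -> R) :
  (forall x, f (x + 2 * PI) = f x) ->
  forall x, exists y, 0 <= y <= 2 * PI /\ f x = f y.
Proof.
  intros Hper. pose proof PI_RGT_0.
  assert (Hn : forall n x, Rabs x <= INR n * (2 * PI) ->
             exists y, 0 <= y <= 2 * PI /\ f x = f y).
  { induction n as [|n IH]; intros x Hx.
    - simpl in Hx. exists 0. assert (x = 0) by (unfold Rabs in Hx; destruct Rcase_abs; lra).
      subst; split; [lra | reflexivity].
    - rewrite S_INR in Hx. destruct (Rle_or_lt 0 x), (Rle_or_lt x (2 * PI)).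
      + exists x; split; [lra | reflexivity].
      + destruct (IH (x - 2 * PI)) as [y [Hy E]]; [rewrite Rabs_pos_eq in *; lra|].
        exists y; split; [exact Hy|]. rewrite <- E, <- (Hper (x - 2 * PI)). f_equal; ring.
      + destruct (Rle_or_lt 0 (x + 2 * PI)).
        * exists (x + 2 * PI); split; [lra | symmetry; apply Hper].
        * destruct (IH (x + 2 * PI)) as [y [Hy E]];
            [rewrite Rabs_left in *; lra|].
          exists y; split; [exact Hy|]. rewrite <- E, Hper; reflexivity.
      + lra. }
  intro x. destruct (INR_archimed (2 * PI) (Rabs x)) as [n Hn']; [lra|].
  apply (Hn n). lra.
Qed.

Section GradientMaximumPrinciple.

Variables (w : R) (u u1 u2 u3 ut u1t a a1 : R -> R -> R).

Hypothesis Hu_cont : cont2 w u.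
Hypothesis Hu1_cont : cont2 w u1.
Hypothesis Hu_per : forall th t, in_dom w t -> u (th + 2 * PI) t = u th t.
Hypothesis Hu1 : forall th t, in_dom w t -> derivable_pt_lim (fun s => u s t) th (u1 th t).
Hypothesis Hu2 : forall th t, 0 < t < w -> derivable_pt_lim (fun s => u1 s t) th (u2 th t).
Hypothesis Hu3 : forall th t, 0 < t < w -> derivable_pt_lim (fun s => u2 s t) th (u3 th t).
Hypothesis Hut : forall th t, 0 < t < w -> derivable_pt_lim (fun s => u th s) t (ut th t).
Hypothesis Hu1t : forall th t, 0 < t < w -> derivable_pt_lim (fun s => u1 th s) t (u1t th t).
Hypothesis Hmixed : forall th t, 0 < t < w -> derivable_pt_lim (fun s => ut s t) th (u1t th t).
Hypothesis Hpde : forall th t, 0 < t < w -> ut th t = a th t * (u2 th t + u th t).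
Hypothesis Ha : forall th t, 0 < t < w -> derivable_pt_lim (fun s => a s t) th (a1 th t).
Hypothesis Ha_pos : forall th t, 0 < t < w -> 0 < a th t.

Definition energy (th t : R) : R := u1 th t ^ 2 + u th t ^ 2.

Lemma energy_periodic (th t : R) : in_dom w t -> energy (th + 2 * PI) t = energy th t.
Proof.
  intro Ht. unfold energy. rewrite (Hu_per th t Ht).
  enough (E : u1 (th + 2 * PI) t = u1 th t) by (rewrite E; reflexivity).
  apply (uniqueness_limite (fun s => u s t) th); [| apply Hu1; exact Ht].
  apply (derivable_pt_lim_ext (fun s => u (s + 2 * PI) t)); [intro; apply Hu_per; exact Ht|].
  replace (u1 (th + 2 * PI) t) with (u1 (th + 2 * PI) t * 1) by ring.
  apply (derivable_pt_lim_comp (fun s => s + 2 * PI) (fun s => u s t)); [|apply Hu1; exact Ht].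
  replace 1 with (1 + 0) by ring.
  apply derivable_pt_lim_plus; [apply derivable_pt_lim_id | apply derivable_pt_lim_const].
Qed.

Lemma energy_theta_deriv (th t : R) : 0 < t < w ->
  derivable_pt_lim (fun s => energy s t) th (2 * u1 th t * (u2 th t + u th t)).
Proof.
  intro Ht. assert (Hdom : in_dom w t) by (unfold in_dom; lra).
  apply (derivable_pt_lim_ext (fun s => u1 s t * u1 s t + u s t * u s t));
    [intro; unfold energy; ring|].
  replace (2 * u1 th t * (u2 th t + u th t))
    with (u2 th t * u1 th t + u1 th t * u2 th t + (u1 th t * u th t + u th t * u1 th t)) by ring.
  apply (derivable_pt_lim_plus (fun s => u1 s t * u1 s t) (fun s => u s t * u s t)).
  - apply (derivable_pt_lim_mult (fun s => u1 s t) (fun s => u1 s t)); auto.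
  - apply (derivable_pt_lim_mult (fun s => u s t) (fun s => u s t)); auto.
Qed.

Lemma energy_theta_second_deriv (th t : R) : 0 < t < w ->
  derivable_pt_lim (fun s => 2 * u1 s t * (u2 s t + u s t)) th
    (2 * u2 th t * (u2 th t + u th t) + 2 * u1 th t * (u3 th t + u1 th t)).
Proof.
  intro Ht.
  apply (derivable_pt_lim_mult (fun s => 2 * u1 s t) (fun s => u2 s t + u s t)).
  - apply (derivable_pt_lim_scal (fun s => u1 s t)), Hu2, Ht.
  - apply (derivable_pt_lim_plus (fun s => u2 s t) (fun s => u s t));
      [apply Hu3, Ht | apply Hu1; unfold in_dom; lra].
Qed.

Lemma energy_time_deriv (th t : R) : 0 < t < w ->
  derivable_pt_lim (fun s => energy th s) t (2 * (u1 th t * u1t th t + u th t * ut th t)).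
Proof.
  intro Ht.
  apply (derivable_pt_lim_ext (fun s => u1 th s * u1 th s + u th s * u th s));
    [intro; unfold energy; ring|].
  replace (2 * (u1 th t * u1t th t + u th t * ut th t))
    with (u1t th t * u1 th t + u1 th t * u1t th t + (ut th t * u th t + u th t * ut th t)) by ring.
  apply (derivable_pt_lim_plus (fun s => u1 th s * u1 th s) (fun s => u th s * u th s)).
  - apply (derivable_pt_lim_mult (fun s => u1 th s) (fun s => u1 th s)); auto.
  - apply (derivable_pt_lim_mult (fun s => u th s) (fun s => u th s)); auto.
Qed.

(** Key computation: at a spatial maximum of E with u_th <> 0, the first and
    second theta-variations give u_thth + u = 0 and u_th (u_thth + u)_th <= 0;
    the equation u_t = a (u_thth + u) then forces E_t <= 0. *)
Lemma energy_time_deriv_nonpos_at_max (th0 t0 : R) :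
  0 < t0 < w -> (forall th, energy th t0 <= energy th0 t0) -> u1 th0 t0 <> 0 ->
  2 * (u1 th0 t0 * u1t th0 t0 + u th0 t0 * ut th0 t0) <= 0.
Proof.
  intros Ht Hmax Hu1nz.
  assert (Hlocal : forall y, Rabs (y - th0) < 1 -> energy y t0 <= energy th0 t0)
    by (intros; apply Hmax).
  assert (Hcrit : u2 th0 t0 + u th0 t0 = 0).
  { pose proof (deriv_zero_at_local_max (fun s => energy s t0) th0 _ 1 ltac:(lra) Hlocal
                  (energy_theta_deriv th0 t0 Ht)) as Hzero.
    apply Rmult_integral in Hzero. destruct Hzero as [Hzero|Hzero]; [|exact Hzero].
    exfalso; apply Hu1nz; lra. }
  assert (Hsecond : u1 th0 t0 * (u3 th0 t0 + u1 th0 t0) <= 0).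
  { pose proof (second_deriv_nonpos_at_local_max (fun s => energy s t0)
                  (fun s => 2 * u1 s t0 * (u2 s t0 + u s t0)) th0 _ 1 ltac:(lra) Hlocal
                  (fun y => energy_theta_deriv y t0 Ht) (energy_theta_second_deriv th0 t0 Ht))
      as Hconcave.
    rewrite Hcrit in Hconcave. lra. }
  assert (Hut0 : ut th0 t0 = 0) by (rewrite Hpde, Hcrit by exact Ht; ring).
  assert (Hu1t0 : u1t th0 t0 = a th0 t0 * (u3 th0 t0 + u1 th0 t0)).
  { transitivity (a1 th0 t0 * (u2 th0 t0 + u th0 t0) + a th0 t0 * (u3 th0 t0 + u1 th0 t0));
      [| rewrite Hcrit; ring].
    apply (uniqueness_limite (fun s => ut s t0) th0); [apply Hmixed; exact Ht|].
    apply (derivable_pt_lim_ext (fun s => a s t0 * (u2 s t0 + u s t0)));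
      [intro; symmetry; apply Hpde; exact Ht|].
    apply (derivable_pt_lim_mult (fun s => a s t0) (fun s => u2 s t0 + u s t0)); [auto|].
    apply (derivable_pt_lim_plus (fun s => u2 s t0) (fun s => u s t0)); auto.
    apply Hu1; unfold in_dom; lra. }
  rewrite Hut0, Hu1t0. pose proof (Ha_pos th0 t0 Ht). nra.
Qed.

Lemma energy_cont : cont2 w energy.
Proof.
  assert (Hsq : forall z, continuity_pt (fun y => y ^ 2) z) by (intro; reg).
  apply (cont2_plus w (fun th t => u1 th t ^ 2) (fun th t => u th t ^ 2)).
  - apply (cont2_comp w u1 (fun y => y ^ 2)); auto.
  - apply (cont2_comp w u (fun y => y ^ 2)); auto.
Qed.

Lemma energy_global_argmax :
  exists thm : R -> R, forall t, in_dom w t ->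
    0 <= thm t <= 2 * PI /\ forall th, energy th t <= energy (thm t) t.
Proof.
  pose proof PI_RGT_0.
  destruct (slice_argmax w energy 0 (2 * PI) ltac:(lra) energy_cont) as [thm Hthm].
  exists thm. intros t Ht. destruct (Hthm t Ht) as [Hin Hmax]. split; [exact Hin|].
  intro th. destruct (periodic_reduce (fun s => energy s t)) with (x := th) as [y [Hy E]];
    [intro; apply energy_periodic; exact Ht |].
  simpl in E. rewrite E. apply Hmax, Hy.
Qed.

Section Bounds.

Variables (varpi A B : R) (thm : R -> R).
Hypothesis Hvarpi : 0 < varpi < w.
Hypothesis HA : forall th t, 0 <= t <= varpi -> u th t ^ 2 <= A.
Hypothesis HB : forall th, energy th 0 <= B.
Hypothesis Hthm : forall t, in_dom w t ->
  0 <= thm t <= 2 * PI /\ forall th, energy th t <= energy (thm t) t.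

(** Maximum principle with a penalization -eps t, which makes the maximum in
    time strict enough to contradict the nonpositive time derivative. *)
Lemma penalized_energy_bound (eps : R) : 0 < eps ->
  forall t, 0 <= t <= varpi -> energy (thm t) t - eps * t <= Rmax A B.
Proof.
  intros Heps.
  assert (Hdom : forall t, 0 <= t <= varpi -> in_dom w t) by (intros t Ht; unfold in_dom; lra).
  destruct (interval_max (fun t => energy (thm t) t - eps * t) 0 varpi) as [ts [Hts Htsmax]];
    [lra | |].
  { intros c Hc e He.
    destruct (slice_max_continuous w energy 0 (2 * PI) thm ltac:(pose proof PI_RGT_0; lra)
                energy_cont ltac:(intros t Ht; split; [apply Hthm | intros; apply Hthm]; auto)
                c (Hdom c Hc) (e / 2) ltac:(lra)) as [d [Hd Hclose]].
    exists (Rmin d (e / (2 * eps))); split;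
      [apply Rmin_pos; [exact Hd | apply Rdiv_lt_0_compat; lra] |].
    pose proof (Rmin_l d (e / (2 * eps))). pose proof (Rmin_r d (e / (2 * eps))).
    intros y Hy Hyc. specialize (Hclose y (Hdom y Hy) ltac:(lra)).
    assert (eps * Rabs (y - c) <= eps * (e / (2 * eps))) by (apply Rmult_le_compat_l; lra).
    replace (eps * (e / (2 * eps))) with (e / 2) in * by (field; lra).
    replace (energy (thm y) y - eps * y - (energy (thm c) c - eps * c))
      with ((energy (thm y) y - energy (thm c) c) + - (eps * (y - c))) by ring.
    eapply Rle_lt_trans; [apply Rabs_triang|].
    rewrite Rabs_Ropp, Rabs_mult, (Rabs_pos_eq eps) by lra. lra. }
  enough (energy (thm ts) ts - eps * ts <= Rmax A B)
    by (intros t Ht; specialize (Htsmax t Ht); simpl in Htsmax; lra).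
  pose proof (Rmax_l A B). pose proof (Rmax_r A B).
  destruct (Req_dec ts 0) as [->|Hts0]; [specialize (HB (thm 0)); lra|].
  destruct (Rle_or_lt (energy (thm ts) ts) A) as [|HEA]; [nra|exfalso].
  assert (Hin : 0 < ts < w) by lra.
  assert (Hu1nz : u1 (thm ts) ts <> 0).
  { intro E. specialize (HA (thm ts) ts Hts). unfold energy in HEA. rewrite E in HEA. lra. }
  pose proof (energy_time_deriv_nonpos_at_max (thm ts) ts Hin (proj2 (Hthm ts (Hdom ts Hts))) Hu1nz).
  assert (Hleft : 0 <= 2 * (u1 (thm ts) ts * u1t (thm ts) ts + u (thm ts) ts * ut (thm ts) ts) - eps * 1).
  { apply (deriv_nonneg_at_left_max (fun s => energy (thm ts) s - eps * s) ts _ ts); [lra| |].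
    - intros h Hh. specialize (Htsmax (ts - h) ltac:(lra)). simpl in Htsmax.
      pose proof (proj2 (Hthm (ts - h) (Hdom (ts - h) ltac:(lra))) (thm ts)). lra.
    - apply (derivable_pt_lim_minus (fun s => energy (thm ts) s) (fun s => eps * s));
        [apply energy_time_deriv; exact Hin|].
      apply (derivable_pt_lim_scal (fun s => s)), derivable_pt_lim_id. }
  lra.
Qed.

End Bounds.

Lemma energy_max_principle (varpi A B : R) :
  0 < varpi < w ->
  (forall th t, 0 <= t <= varpi -> u th t ^ 2 <= A) ->
  (forall th, energy th 0 <= B) ->
  forall th t, 0 <= t <= varpi -> energy th t <= Rmax A B.
Proof.
  intros Hvarpi HA HB th t Ht. apply Rnot_lt_le; intro Hbig.
  destruct energy_global_argmax as [thm Hthm].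
  assert (Hdom : in_dom w t) by (unfold in_dom; lra).
  set (eps := (energy th t - Rmax A B) / (2 * varpi)).
  assert (Heps : 0 < eps) by (unfold eps; apply Rdiv_lt_0_compat; lra).
  pose proof (penalized_energy_bound varpi A B thm Hvarpi HA HB Hthm eps Heps t Ht).
  pose proof (proj2 (Hthm t Hdom) th).
  assert (eps * t <= eps * varpi) by (apply Rmult_le_compat_l; lra).
  assert (eps * varpi = (energy th t - Rmax A B) / 2) by (unfold eps; field; lra).
  lra.
Qed.

End GradientMaximumPrinciple.

Lemma smooth2_mixed (w : R) (f : R -> R -> R) :
  Smooth2 w f ->
  exists f1 ft fm : R -> R -> R,
    cont2 w f /\ cont2 w f1 /\
    (forall th t, in_dom w t -> derivable_pt_lim (fun s => f s t) th (f1 th t)) /\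
    (forall th t, 0 < t < w -> derivable_pt_lim (fun s => f th s) t (ft th t)) /\
    (forall th t, 0 < t < w -> derivable_pt_lim (fun s => f1 th s) t (fm th t)) /\
    (forall th t, 0 < t < w -> derivable_pt_lim (fun s => ft s t) th (fm th t)).
Proof.
  intros Sf. destruct Sf as [f Cf [f1 [Df1 Sf1]] [ft [Dft Sft]]].
  destruct Sf1 as [f1 Cf1 _ [f1t [Df1t Sf1t]]]. destruct Sf1t as [f1t Cf1t _ _].
  destruct Sft as [ft _ [ftth [Dftth Sftth]] _]. destruct Sftth as [ftth Cftth _ _].
  exists f1, ft, f1t. repeat split; try assumption.
  intros th t Ht.
  rewrite (schwarz w f f1 ft f1t ftth th t Ht Df1 Dft Df1t Dftth Cf1t Cftth).
  apply Dftth. unfold in_dom; lra.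
Qed.

Lemma reciprocal_profile_deriv (phi kappa : R -> R) (c t m kt lo hi : R) :
  lo < t < hi -> (forall s, lo < s < hi -> phi s = c / kappa s) ->
  derivable_pt_lim phi t m -> derivable_pt_lim kappa t kt -> kappa t <> 0 ->
  m = - c * kt / (kappa t) ^ 2.
Proof.
  intros Ht Hphi Hm Hk Hk0.
  apply (uniqueness_limite phi t); [exact Hm|].
  apply (derivable_pt_lim_locally_ext (fun s => c / kappa s) phi t lo hi);
    [exact Ht | intros; symmetry; auto |].
  eapply derivable_pt_lim_ext; [intro; reflexivity|].
  replace (- c * kt / kappa t ^ 2) with ((0 * kappa t - kt * c) / (kappa t)²)
    by (unfold Rsqr; field; exact Hk0).
  apply (derivable_pt_lim_div (fun _ => c) kappa); [apply derivable_pt_lim_const | exact Hk | exact Hk0].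
Qed.

(** Components of a vector (p, q) in the moving frame N = (-sin, cos),
    T = (cos, sin), when (p, q)' = - r T: the derivative of the normal
    component is minus the tangential one, and that of the tangential
    component is r minus the normal one. *)
Section RotatingFrame.
Variables p q r : R -> R.
Hypothesis Hp : forall y, derivable_pt_lim p y (- cos y * r y).
Hypothesis Hq : forall y, derivable_pt_lim q y (- sin y * r y).

Lemma normal_component_deriv (x : R) :
  derivable_pt_lim (fun y => - p y * sin y + q y * cos y) x (- (p x * cos x + q x * sin x)).
Proof.
  eapply derivable_pt_lim_ext; [intro; reflexivity|].
  replace (- (p x * cos x + q x * sin x))
    with (- (- cos x * r x) * sin x + - p x * cos x + ((- sin x * r x) * cos x + q x * - sin x))
    by ring.
  apply (derivable_pt_lim_plus (fun y => - p y * sin y) (fun y => q y * cos y)).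
  - apply (derivable_pt_lim_mult (fun y => - p y) sin);
      [apply (derivable_pt_lim_opp p); apply Hp | apply derivable_pt_lim_sin].
  - apply (derivable_pt_lim_mult q cos); [apply Hq | apply derivable_pt_lim_cos].
Qed.

Lemma tangent_component_deriv (x : R) :
  derivable_pt_lim (fun y => - (p y * cos y + q y * sin y)) x
    (r x - (- p x * sin x + q x * cos x)).
Proof.
  eapply derivable_pt_lim_ext; [intro; reflexivity|].
  replace (r x - (- p x * sin x + q x * cos x))
    with (- ((- cos x * r x) * cos x + p x * - sin x + ((- sin x * r x) * sin x + q x * cos x)))
    by (pose proof (sin2_cos2 x) as Hsc; unfold Rsqr in Hsc; symmetry;
        transitivity (r x * (sin x * sin x + cos x * cos x) - (- p x * sin x + q x * cos x));
        [rewrite Hsc; ring | ring]).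
  apply (derivable_pt_lim_opp (fun y => p y * cos y + q y * sin y)).
  apply (derivable_pt_lim_plus (fun y => p y * cos y) (fun y => q y * sin y)).
  - apply (derivable_pt_lim_mult p cos); [apply Hp | apply derivable_pt_lim_cos].
  - apply (derivable_pt_lim_mult q sin); [apply Hq | apply derivable_pt_lim_sin].
Qed.

End RotatingFrame.

(** Curvature evolution for the flow: since d gamma / d theta = T / k and the
    normal velocity is Phi(k), we get Phi(k)_thth + Phi(k) = k_t / k^2. *)
Lemma curvature_evolution (G : R -> R) (w : R) (X Y k : R -> R -> R) (t : R)
    (kt u1 : R -> R) :
  is_flow G w X Y k -> 0 < t < w ->
  (forall th, derivable_pt_lim (fun s => k th s) t (kt th)) ->
  (forall th, derivable_pt_lim (fun s => Phi G (k s t)) th (u1 th)) ->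
  forall th, derivable_pt_lim u1 th (kt th / (k th t) ^ 2 - Phi G (k th t)).
Proof.
  intros [SX [SY [_ [_ [Hkpos [Htangent Hnormal]]]]]] Ht Hkt Hu1.
  destruct (smooth2_mixed w X SX) as [X1 [Xt [Xm [_ [_ [DX1 [DXt [DX1t DXm]]]]]]]].
  destruct (smooth2_mixed w Y SY) as [Y1 [Yt [Ym [_ [_ [DY1 [DYt [DY1t DYm]]]]]]]].
  assert (Hdom : forall s, 0 < s < w -> in_dom w s) by (intros s Hs; unfold in_dom; lra).
  set (r := fun th => kt th / (k th t) ^ 2).
  (* The time derivative of the tangent (cos, sin)/k turns with the frame. *)
  assert (HXm : forall th, Xm th t = - cos th * r th).
  { intro th. pose proof (Hkpos th t (Hdom t Ht)).
    assert (HX1 : forall s, 0 < s < w -> X1 th s = cos th / k th s).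
    { intros s Hs. apply (uniqueness_limite (fun a => X a s) th);
        [apply DX1 | apply (Htangent th s)]; apply Hdom; exact Hs. }
    rewrite (reciprocal_profile_deriv (fun s => X1 th s) (fun s => k th s) (cos th) t
               (Xm th t) (kt th) 0 w Ht HX1 (DX1t th t Ht) (Hkt th)) by lra.
    unfold r, Rdiv; ring. }
  assert (HYm : forall th, Ym th t = - sin th * r th).
  { intro th. pose proof (Hkpos th t (Hdom t Ht)).
    assert (HY1 : forall s, 0 < s < w -> Y1 th s = sin th / k th s).
    { intros s Hs. apply (uniqueness_limite (fun a => Y a s) th);
        [apply DY1 | apply (Htangent th s)]; apply Hdom; exact Hs. }
    rewrite (reciprocal_profile_deriv (fun s => Y1 th s) (fun s => k th s) (sin th) t
               (Ym th t) (kt th) 0 w Ht HY1 (DY1t th t Ht) (Hkt th)) by lra.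
    unfold r, Rdiv; ring. }
  set (p := fun th => Xt th t). set (q := fun th => Yt th t).
  assert (Hp : forall th, derivable_pt_lim p th (- cos th * r th))
    by (intro th; rewrite <- HXm; apply DXm; exact Ht).
  assert (Hq : forall th, derivable_pt_lim q th (- sin th * r th))
    by (intro th; rewrite <- HYm; apply DYm; exact Ht).
  assert (Hvel : forall th, Phi G (k th t) = - p th * sin th + q th * cos th).
  { intro th. destruct (Hnormal th t Ht) as [xt [yt [Hxt [Hyt Hv]]]].
    rewrite <- Hv. unfold p, q.
    rewrite (uniqueness_limite (fun s => X th s) t (Xt th t) xt (DXt th t Ht) Hxt).
    rewrite (uniqueness_limite (fun s => Y th s) t (Yt th t) yt (DYt th t Ht) Hyt).
    ring. }
  assert (Hu1_frame : forall th, u1 th = - (p th * cos th + q th * sin th)).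
  { intro th. apply (uniqueness_limite (fun s => Phi G (k s t)) th); [apply Hu1|].
    apply (derivable_pt_lim_ext (fun y => - p y * sin y + q y * cos y));
      [intro y; symmetry; apply Hvel|].
    apply (normal_component_deriv p q r Hp Hq). }
  intro th. rewrite Hvel.
  apply (derivable_pt_lim_ext (fun y => - (p y * cos y + q y * sin y)));
    [intro y; symmetry; apply Hu1_frame|].
  apply (tangent_component_deriv p q r Hp Hq).
Qed.

Lemma Phi_regular (G : R -> R) : H1 G ->
  exists dPhi ddPhi : R -> R,
    (forall x, 0 < x -> derivable_pt_lim (Phi G) x (dPhi x)) /\
    (forall x, 0 < x -> derivable_pt_lim dPhi x (ddPhi x)) /\
    (forall x, 0 < x -> 0 < dPhi x).
Proof.
  intros [G1 [G2 [_ [DG [DG1 [_ [_ [Gpos G1nn]]]]]]]].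
  exists (fun x => G1 x * x + G x), (fun x => G2 x * x + G1 x * 1 + G1 x).
  split; [|split].
  - intros x Hx. unfold Phi.
    replace (G1 x * x + G x) with (G1 x * x + G x * 1) by ring.
    apply (derivable_pt_lim_mult G (fun s => s)); [apply DG; exact Hx | apply derivable_pt_lim_id].
  - intros x Hx.
    apply (derivable_pt_lim_plus (fun s => G1 s * s) G); [| apply DG; exact Hx].
    apply (derivable_pt_lim_mult G1 (fun s => s)); [apply DG1; exact Hx | apply derivable_pt_lim_id].
  - intros x Hx. specialize (Gpos x Hx). specialize (G1nn x Hx). nra.
Qed.

Section SpeedOfCurvature.

Variables (G dPhi ddPhi : R -> R) (w : R) (k k1 kt km : R -> R -> R).

Hypothesis HdPhi : forall x, 0 < x -> derivable_pt_lim (Phi G) x (dPhi x).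
Hypothesis HddPhi : forall x, 0 < x -> derivable_pt_lim dPhi x (ddPhi x).
Hypothesis HdPhi_pos : forall x, 0 < x -> 0 < dPhi x.
Hypothesis Hk_cont : cont2 w k.
Hypothesis Hk1_cont : cont2 w k1.
Hypothesis Hk_per : forall th t, in_dom w t -> k (th + 2 * PI) t = k th t.
Hypothesis Hk_pos : forall th t, in_dom w t -> 0 < k th t.
Hypothesis Hk1 : forall th t, in_dom w t -> derivable_pt_lim (fun s => k s t) th (k1 th t).
Hypothesis Hkt : forall th t, 0 < t < w -> derivable_pt_lim (fun s => k th s) t (kt th t).
Hypothesis Hk1t : forall th t, 0 < t < w -> derivable_pt_lim (fun s => k1 th s) t (km th t).
Hypothesis Hktth : forall th t, 0 < t < w -> derivable_pt_lim (fun s => kt s t) th (km th t).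

(** The formula for u_thth is the one given
    by the flow (lemma curvature_evolution); speed_ththth is its
    theta-derivative, speed_tht the mixed derivative of u, and
    a = diffusivity = Phi'(k) k^2 the coefficient in u_t = a (u_thth + u). *)
Definition speed (th t : R) : R := Phi G (k th t).
Definition speed_th (th t : R) : R := dPhi (k th t) * k1 th t.
Definition speed_thth (th t : R) : R := kt th t / k th t ^ 2 - speed th t.
Definition speed_ththth (th t : R) : R :=
  (km th t * k th t ^ 2 - 2 * k th t * k1 th t * kt th t) / (k th t ^ 2) ^ 2 - speed_th th t.
Definition speed_t (th t : R) : R := dPhi (k th t) * kt th t.
Definition speed_tht (th t : R) : R :=
  ddPhi (k th t) * kt th t * k1 th t + dPhi (k th t) * km th t.
Definition diffusivity (th t : R) : R := dPhi (k th t) * k th t ^ 2.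
Definition diffusivity_th (th t : R) : R :=
  ddPhi (k th t) * k1 th t * k th t ^ 2 + dPhi (k th t) * (2 * k th t * k1 th t).

Let interior_dom t : 0 < t < w -> in_dom w t.
Proof. unfold in_dom; lra. Qed.

Lemma speed_th_deriv (th t : R) : in_dom w t ->
  derivable_pt_lim (fun s => speed s t) th (speed_th th t).
Proof.
  intro Ht. unfold speed, speed_th.
  apply (derivable_pt_lim_comp (fun s => k s t) (Phi G)); [apply Hk1, Ht | apply HdPhi, Hk_pos, Ht].
Qed.

Lemma speed_cont : cont2 w speed.
Proof.
  apply (cont2_comp w k (Phi G)); [exact Hk_cont|].
  intros th t Ht. exact (derivable_continuous_pt _ _ (exist _ _ (HdPhi _ (Hk_pos th t Ht)))).
Qed.

Lemma speed_th_cont : cont2 w speed_th.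
Proof.
  apply (cont2_mult w (fun th t => dPhi (k th t)) k1); [|exact Hk1_cont].
  apply (cont2_comp w k dPhi); [exact Hk_cont|].
  intros th t Ht. exact (derivable_continuous_pt _ _ (exist _ _ (HddPhi _ (Hk_pos th t Ht)))).
Qed.

Lemma speed_periodic (th t : R) : in_dom w t -> speed (th + 2 * PI) t = speed th t.
Proof. intro Ht. unfold speed. rewrite Hk_per by exact Ht. reflexivity. Qed.

Lemma speed_ththth_deriv (th t : R) : 0 < t < w ->
  derivable_pt_lim (fun s => speed_thth s t) th (speed_ththth th t).
Proof.
  intro Ht. pose proof (Hk_pos th t (interior_dom t Ht)).
  unfold speed_thth, speed_ththth.
  apply (derivable_pt_lim_minus (fun s => kt s t / k s t ^ 2) (fun s => speed s t));
    [| apply speed_th_deriv, interior_dom, Ht].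
  replace ((km th t * k th t ^ 2 - 2 * k th t * k1 th t * kt th t) / (k th t ^ 2) ^ 2)
    with ((km th t * k th t ^ 2 - (k1 th t * k th t + k th t * k1 th t) * kt th t) / (k th t ^ 2)²)
    by (unfold Rsqr; field; lra).
  apply (derivable_pt_lim_div (fun s => kt s t) (fun s => k s t ^ 2)); [apply Hktth, Ht | | nra].
  apply (derivable_pt_lim_ext (fun s => k s t * k s t)); [intro; ring|].
  apply (derivable_pt_lim_mult (fun s => k s t) (fun s => k s t)); apply Hk1, interior_dom, Ht.
Qed.

Lemma speed_t_deriv (th t : R) : 0 < t < w ->
  derivable_pt_lim (fun s => speed th s) t (speed_t th t).
Proof.
  intro Ht. unfold speed, speed_t.
  apply (derivable_pt_lim_comp (fun s => k th s) (Phi G));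
    [apply Hkt, Ht | apply HdPhi, Hk_pos, interior_dom, Ht].
Qed.

Lemma speed_th_t_deriv (th t : R) : 0 < t < w ->
  derivable_pt_lim (fun s => speed_th th s) t (speed_tht th t).
Proof.
  intro Ht. unfold speed_th, speed_tht.
  apply (derivable_pt_lim_mult (fun s => dPhi (k th s)) (fun s => k1 th s)); [|apply Hk1t, Ht].
  apply (derivable_pt_lim_comp (fun s => k th s) dPhi);
    [apply Hkt, Ht | apply HddPhi, Hk_pos, interior_dom, Ht].
Qed.

Lemma speed_t_th_deriv (th t : R) : 0 < t < w ->
  derivable_pt_lim (fun s => speed_t s t) th (speed_tht th t).
Proof.
  intro Ht. unfold speed_t, speed_tht.
  replace (ddPhi (k th t) * kt th t * k1 th t + dPhi (k th t) * km th t)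
    with (ddPhi (k th t) * k1 th t * kt th t + dPhi (k th t) * km th t) by ring.
  apply (derivable_pt_lim_mult (fun s => dPhi (k s t)) (fun s => kt s t)); [|apply Hktth, Ht].
  apply (derivable_pt_lim_comp (fun s => k s t) dPhi); [apply Hk1, interior_dom, Ht|].
  apply HddPhi, Hk_pos, interior_dom, Ht.
Qed.

Lemma speed_equation (th t : R) : 0 < t < w ->
  speed_t th t = diffusivity th t * (speed_thth th t + speed th t).
Proof.
  intro Ht. pose proof (Hk_pos th t (interior_dom t Ht)).
  unfold speed_t, diffusivity, speed_thth. field. lra.
Qed.

Lemma diffusivity_deriv (th t : R) : 0 < t < w ->
  derivable_pt_lim (fun s => diffusivity s t) th (diffusivity_th th t).
Proof.
  intro Ht. unfold diffusivity, diffusivity_th.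
  apply (derivable_pt_lim_mult (fun s => dPhi (k s t)) (fun s => k s t ^ 2)).
  - apply (derivable_pt_lim_comp (fun s => k s t) dPhi); [apply Hk1, interior_dom, Ht|].
    apply HddPhi, Hk_pos, interior_dom, Ht.
  - apply (derivable_pt_lim_ext (fun s => k s t * k s t)); [intro; ring|].
    replace (2 * k th t * k1 th t) with (k1 th t * k th t + k th t * k1 th t) by ring.
    apply (derivable_pt_lim_mult (fun s => k s t) (fun s => k s t)); apply Hk1, interior_dom, Ht.
Qed.

Lemma diffusivity_pos (th t : R) : 0 < t < w -> 0 < diffusivity th t.
Proof.
  intro Ht. pose proof (Hk_pos th t (interior_dom t Ht)) as Hk. unfold diffusivity.
  apply Rmult_lt_0_compat; [apply HdPhi_pos, Hk | apply pow_lt, Hk].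
Qed.

End SpeedOfCurvature.

Lemma flow_energy_bound (G : R -> R) (w : R) (X Y k : R -> R -> R) (varpi A B : R) :
  H1 G -> is_flow G w X Y k -> 0 < varpi < w ->
  (forall th t, 0 <= t <= varpi -> Phi G (k th t) ^ 2 <= A) ->
  (forall th d, derivable_pt_lim (fun s => Phi G (k s 0)) th d -> d ^ 2 + Phi G (k th 0) ^ 2 <= B) ->
  forall th t d, 0 <= t <= varpi -> derivable_pt_lim (fun s => Phi G (k s t)) th d ->
    d ^ 2 + Phi G (k th t) ^ 2 <= Rmax A B.
Proof.
  intros HG Hflow Hvarpi HA HB th t d Ht Hd.
  destruct (Phi_regular G HG) as [dPhi [ddPhi [HdPhi [HddPhi HdPhi_pos]]]].
  pose proof Hflow as [_ [_ [Sk [Hper [Hk_pos _]]]]].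
  destruct (smooth2_mixed w k Sk) as [k1 [kt [km [Ck [Ck1 [Dk1 [Dkt [Dk1t Dkm]]]]]]]].
  assert (Hk_per : forall th t, in_dom w t -> k (th + 2 * PI) t = k th t)
    by (intros; apply Hper; assumption).
  assert (Hdom : in_dom w t) by (unfold in_dom; lra).
  rewrite (uniqueness_limite _ _ _ _ Hd (speed_th_deriv G dPhi w k k1 HdPhi Hk_pos Dk1 th t Hdom)).
  apply (energy_max_principle w (speed G k) (speed_th dPhi k k1) (speed_thth G k kt)
           (speed_ththth dPhi k k1 kt km) (speed_t dPhi k kt) (speed_tht dPhi ddPhi k k1 kt km)
           (diffusivity dPhi k) (diffusivity_th dPhi ddPhi k k1))
    with (varpi := varpi); try assumption.
  - eapply speed_cont; eauto.
  - eapply speed_th_cont; eauto.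
  - intros; eapply speed_periodic; eauto.
  - intros; eapply speed_th_deriv; eauto.
  - intros th' t' Ht'.
    apply (curvature_evolution G w X Y k t' (fun s => kt s t') (fun s => speed_th dPhi k k1 s t'));
      [exact Hflow | exact Ht' | intro; apply Dkt, Ht' |].
    intro; eapply speed_th_deriv; eauto. unfold in_dom; lra.
  - intros; eapply speed_ththth_deriv; eauto.
  - intros; eapply speed_t_deriv; eauto.
  - intros; eapply speed_th_t_deriv; eauto.
  - intros; eapply speed_t_th_deriv; eauto.
  - intros; eapply speed_equation; eauto.
  - intros; eapply diffusivity_deriv; eauto.
  - intros; eapply diffusivity_pos; eauto.
  - intro th'. apply HB. eapply speed_th_deriv; eauto. unfold in_dom; lra.
Qed.

Theorem lemma3p4 (G : R -> R) (w : R) (X Y k : R -> R -> R) :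
  H1 G -> H2 G -> 0 < w -> is_flow G w X Y k ->
  forall varpi, 0 < varpi < w ->
  forall A B : R,
    (forall th t, 0 <= t <= varpi -> (Phi G (k th t)) ^ 2 <= A) ->
    (forall th d, derivable_pt_lim (fun s => Phi G (k s 0)) th d ->
        d ^ 2 + 2 * (Phi G (k th 0)) ^ 2 <= B) ->
    forall th t d, 0 <= t <= varpi ->
      derivable_pt_lim (fun s => Phi G (k s t)) th d ->
      d ^ 2 <= Rmax (2 * A) B.
Proof.
  intros HG _ _ Hflow varpi Hvarpi A B HA HB th t d Ht Hd.
  assert (HA0 : 0 <= A)
    by (pose proof (pow2_ge_0 (Phi G (k 0 0))); specialize (HA 0 0 ltac:(lra)); lra).
  assert (HB' : forall th d, derivable_pt_lim (fun s => Phi G (k s 0)) th d ->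
                  d ^ 2 + Phi G (k th 0) ^ 2 <= B)
    by (intros th' d' Hd'; pose proof (pow2_ge_0 (Phi G (k th' 0))); specialize (HB th' d' Hd'); lra).
  pose proof (flow_energy_bound G w X Y k varpi A B HG Hflow Hvarpi HA HB' th t d Ht Hd).
  pose proof (pow2_ge_0 (Phi G (k th t))).
  assert (Rmax A B <= Rmax (2 * A) B)
    by (apply Rmax_lub; [eapply Rle_trans; [| apply Rmax_l] | apply Rmax_r]; lra).
  lra.
Qed.
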